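(* Let $f\in\mathbb{R}[X_1,\dots,X_n]$ be a form of degree $2d$. If $$f_{2d,i}\ge \sum_{\alpha\in\Delta,\ \alpha_i\ne 0}\alpha_i\left(\frac{|f_{\alpha}|}{2d}\right)^{2d/(\alpha_in_{\alpha})}\quad\text{for } i=1,\dots,n,$$ where $n_{\alpha}:=|\{i:\alpha_i\neq0\}|$, then $f$ is SOBS.
   Context: For $\alpha\in\mathbb{N}^n$ write $\underline{X}^\alpha=X_1^{\alpha_1}\cdots X_n^{\alpha_n}$. For $f=\sum_\alpha f_\alpha\underline{X}^\alpha$ of degree $2d$, $f_{2d,i}$ denotes the coefficient of $X_i^{2d}$, $\Omega=\{\alpha: f_\alpha\ne0\}\setminus\{\underline{0},2d\epsilon_1,\dots,2d\epsilon_n\}$ ($\epsilon_i$ the standard unit vectors), and $\Delta=\{\alpha\in\Omega:\ f_\alpha<0\text{ or }\alpha_i\text{ odd for some }i\}$. SOBS means a finite sum of squares of polynomials of the form $a\underline{X}^\alpha-b\underline{X}^\beta$, $a,b\in\mathbb{R}$. *)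

From mathcomp Require Import all_boot all_algebra.
From mathcomp Require Import mpoly.
From mathcomp Require Import Rstruct.
From Stdlib Require Rpower.
Set Implicit Arguments. Unset Strict Implicit. Unset Printing Implicit Defensive.
Import GRing.Theory Num.Theory.
Local Open Scope ring_scope.

Notation RR := Rdefinitions.R.

Definition mono2d (n d : nat) (i : 'I_n) : 'X_{1..n} :=
  [multinom (if j == i then (2 * d)%N else 0%N) | j < n].

Definition inOmega (n d : nat) (f : {mpoly RR[n]}) (a : 'X_{1..n}) : bool :=
  [&& f@_a != 0, a != 0%MM & [forall i : 'I_n, a != mono2d d i]].

Definition inDelta (n d : nat) (f : {mpoly RR[n]}) (a : 'X_{1..n}) : bool :=
  inOmega d f a && ((f@_a < 0) || [exists i : 'I_n, odd (a i)]).

Definition nalpha (n : nat) (a : 'X_{1..n}) : nat := #|[pred i : 'I_n | a i != 0%N]|.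

(* sum_{alpha in Delta, alpha_i <> 0} alpha_i (|f_alpha|/2d)^(2d/(alpha_i n_alpha)) ;
   Delta is contained in the support of f, so we sum over msupp f. *)
Definition rhs_bound (n d : nat) (f : {mpoly RR[n]}) (i : 'I_n) : RR :=
  \sum_(a <- msupp f | inDelta d f a && (a i != 0%N))
     (a i)%:R * Rpower.Rpower (`|f@_a| / (2 * d)%:R)
                              ((2 * d)%:R / (a i * nalpha a)%:R).

Definition SOBS (n : nat) (f : {mpoly RR[n]}) : Prop :=
  exists s : seq (RR * RR * 'X_{1..n} * 'X_{1..n}),
    f = \sum_(t <- s) (t.1.1.1 *: 'X_[t.1.2] - t.1.1.2 *: 'X_[t.2]) ^+ 2.

From mathcomp Require Import all_boot all_order all_algebra.
From mathcomp Require Import mpoly.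
From mathcomp Require Import Rstruct.
From mathcomp Require Import ring.
From Stdlib Require Rpower Exp_prop.
Import Order.TTheory GRing.Theory Num.Theory.
Set Implicit Arguments. Unset Strict Implicit. Unset Printing Implicit Defensive.
Local Open Scope ring_scope.

(* Each term [c X^a] with [a] in Delta is absorbed by the vertex terms through
   the weighted AM-GM form [\sum_k a_k (t_k X_k)^(2d) - 2d \prod_k (t_k X_k)^(a_k)],
   with reals [t_k] chosen so that [t_k^(2d)] is the prescribed weight and
   [2d \prod_k t_k^(a_k) = -c] (an odd [a_j] lets us flip the sign of [t_j] when
   [c > 0]).  Following Hurwitz, that form is a sum of binomial squares: merging
   the exponents [a_i], [a_j] into one coordinate reduces the support, at the cost
   of the two-variable form [p u^(p+q) + q v^(p+q) - (p+q) u^p v^q], which lies in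
   the cone generated by the [u^k v^l (u - v)^2].  What remains of [f] are the
   vertex terms, nonnegative by hypothesis, and terms outside Delta, which have a
   positive coefficient and even exponents. *)

Section TwoTermAMGM.
Variables (R : comNzRingType) (C : R -> Prop) (w u v : R).
Hypotheses (C0 : C 0) (CD : forall x y, C x -> C y -> C (x + y)).
Hypothesis C_gen : forall k l, C (w * u ^+ k * v ^+ l * (u - v) ^+ 2).

Let cone x := forall k l, C (w * u ^+ k * v ^+ l * x).

Let coneD x y : cone x -> cone y -> cone (x + y).
Proof. by move=> Cx Cy k l; rewrite mulrDr; apply: CD. Qed.

Let coneMl x : cone x -> cone (u * x).
Proof. by move=> Cx k l; have := Cx k.+1 l; rewrite exprS; congr C; ring. Qed.

Let coneMr x : cone x -> cone (v * x).
Proof. by move=> Cx k l; have := Cx k l.+1; rewrite exprS; congr C; ring. Qed.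

Let cone_subX r : cone ((u - v) * (u ^+ r - v ^+ r)).
Proof.
elim: r => [|r IHr] k l; first by rewrite subrr !mulr0.
have -> : (u - v) * (u ^+ r.+1 - v ^+ r.+1)
    = u * ((u - v) * (u ^+ r - v ^+ r)) + v ^+ r * (u - v) ^+ 2.
  by rewrite !exprS; ring.
apply: coneD (coneMl IHr) _ k l => k' l'.
by have := C_gen k' (l' + r); rewrite exprD; congr C; ring.
Qed.

(* [D (p.+1) q - u * D p q], where [D p q] is the bracket in [amgm2_cone] *)
Let cone_increment p q :
  cone (u ^+ p.+1 * (u ^+ q - v ^+ q) - (v ^+ (p + q) * (u - v)) *+ q).
Proof.
elim: q => [|q IHq]; first by rewrite subrr mulr0 mulr0n subrr => k l; rewrite mulr0.
have -> : u ^+ p.+1 * (u ^+ q.+1 - v ^+ q.+1) - (v ^+ (p + q.+1) * (u - v)) *+ q.+1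
   = v * (u ^+ p.+1 * (u ^+ q - v ^+ q) - (v ^+ (p + q) * (u - v)) *+ q)
     + (u - v) * (u ^+ (p + q).+1 - v ^+ (p + q).+1).
  by rewrite addnS !exprS !exprD; ring.
exact: coneD (coneMr IHq) (cone_subX _).
Qed.

Lemma amgm2_cone p q :
  C (w * (u ^+ (p + q) *+ p + v ^+ (p + q) *+ q - (u ^+ p * v ^+ q) *+ (p + q))).
Proof.
suff D_cone : cone (u ^+ (p + q) *+ p + v ^+ (p + q) *+ q - (u ^+ p * v ^+ q) *+ (p + q)).
  by have := D_cone 0%N 0%N; rewrite !expr0 !mulr1.
elim: p => [|p IHp]; first by rewrite !add0n !mulr0n add0r expr0 mul1r subrr => k l; rewrite mulr0.
have -> : u ^+ (p.+1 + q) *+ p.+1 + v ^+ (p.+1 + q) *+ q - (u ^+ p.+1 * v ^+ q) *+ (p.+1 + q)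
   = u * (u ^+ (p + q) *+ p + v ^+ (p + q) *+ q - (u ^+ p * v ^+ q) *+ (p + q))
     + (u ^+ p.+1 * (u ^+ q - v ^+ q) - (v ^+ (p + q) * (u - v)) *+ q).
  by rewrite !addSn !exprS !exprD; ring.
exact: coneD (coneMl IHp) (cone_increment _ _).
Qed.

End TwoTermAMGM.

Definition power_sum (R : pzSemiRingType) k (x : 'I_k -> R) (m : nat) (a : 'X_{1..k}) : R :=
  \sum_(l < k) x l ^+ m *+ a l.

Definition mmove k (a : 'X_{1..k}) (i j : 'I_k) : 'X_{1..k} :=
  [multinom if l == i then 0%N else if l == j then (a i + a j)%N else a l | l < k].

Section MultinomialSurgery.
Variables (k : nat) (a : 'X_{1..k}) (i j : 'I_k).
Hypothesis neq_ij : i != j.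

Lemma big_pair (R : Type) (idx : R) (op : Monoid.com_law idx) (F : 'I_k -> R) :
  \big[op/idx]_l F l = op (F i) (op (F j) (\big[op/idx]_(l | (l != i) && (l != j)) F l)).
Proof. by rewrite (bigD1 i) // (bigD1 j) //= eq_sym neq_ij. Qed.

Lemma mmoveE l : mmove a i j l = if l == i then 0%N else if l == j then (a i + a j)%N else a l.
Proof. exact: mnmE. Qed.

Lemma mdeg_mmove : mdeg (mmove a i j) = mdeg a.
Proof.
rewrite !mdegE !big_pair /= !mmoveE eqxx eq_sym (negbTE neq_ij) eqxx add0n -addnA.
by congr (_ + (_ + _))%N; apply: eq_bigr => l /andP [/negbTE li /negbTE lj]; rewrite mmoveE li lj.
Qed.

Lemma nalpha_mmove : a i != 0%N -> a j != 0%N -> (nalpha (mmove a i j) < nalpha a)%N.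
Proof.
move=> ai aj; apply: proper_card; apply/properP; split.
  apply/subsetP => l; rewrite !inE mmoveE.
  by case: (l =P i) => // _; case: (l =P j) => // ->.
by exists i; rewrite !inE ?mmoveE ?eqxx.
Qed.

End MultinomialSurgery.

Section PowerSum.
Variables (R : comNzRingType) (k : nat) (x : 'I_k -> R).

Lemma power_sumD m a b : power_sum x m (a + b) = power_sum x m a + power_sum x m b.
Proof. by rewrite /power_sum -big_split; apply: eq_bigr => l _; rewrite mnmDE mulrnDr. Qed.

Lemma power_sum_mmove m a i j : i != j ->
  power_sum x m a *+ (a i + a j)
  = power_sum x m (mmove a i j) *+ a j + power_sum x m (mmove a j i) *+ a i.
Proof.
move=> neq_ij; rewrite /power_sum -!sumrMnl -big_split; apply: eq_bigr => l _ /=.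
rewrite -!mulrnA -mulrnDr !mmoveE; congr (_ *+ _).
case: (l =P i) => [->|_]; first by rewrite (negbTE neq_ij) mul0n add0n addnC mulnC.
case: (l =P j) => [->|_]; first by rewrite mul0n addn0 mulnC.
by rewrite -mulnDr addnC.
Qed.

Lemma mmap1_pair a i j : i != j ->
  mmap1 x a = x i ^+ a i * x j ^+ a j * \prod_(l | (l != i) && (l != j)) x l ^+ a l.
Proof. by move=> neq_ij; rewrite /mmap1 (big_pair neq_ij) /= mulrA. Qed.

Lemma mmap1_mmove a i j : i != j ->
  mmap1 x (mmove a i j) = x j ^+ (a i + a j) * \prod_(l | (l != i) && (l != j)) x l ^+ a l.
Proof.
move=> neq_ij; rewrite (mmap1_pair _ neq_ij) !mmoveE eqxx eq_sym (negbTE neq_ij) eqxx mul1r.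
by congr (_ * _); apply: eq_bigr => l /andP [/negbTE li /negbTE lj]; rewrite mmoveE li lj.
Qed.

Lemma power_sum_single (a : 'X_{1..k}) : (forall i j, a i != 0%N -> a j != 0%N -> i = j) ->
  power_sum x (2 * mdeg a) a = mmap1 x a ^+ 2 *+ mdeg a.
Proof.
move=> single; case: (pickP (fun l => a l != 0%N)) => [i ai | a0]; last first.
  have mdeg0 : mdeg a = 0%N by rewrite mdegE big1 // => l _; apply/eqP/negbFE/a0.
  by rewrite mdeg0 mulr0n /power_sum big1 // => l _; rewrite (eqP (negbFE (a0 l))).
have a_off l : l != i -> a l = 0%N.
  by move=> li; apply/eqP; apply: contraNT li => al; apply/eqP/(single _ _ al).
have /= mdegE_i : mdeg a = a i.
  by rewrite mdegE (bigD1 i) //= big1 ?addn0 // => l /a_off.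
rewrite mdegE_i /power_sum /mmap1 (bigD1 i) //= big1 ?addr0; last by move=> l /a_off ->.
rewrite (bigD1 i) //= big1 ?mulr1 -?exprM ?(mulnC 2%N) // => l /a_off ->.
by rewrite expr0.
Qed.

End PowerSum.

Lemma mdeg_split k (a : 'X_{1..k}) d : (d <= mdeg a)%N ->
  exists b c, a = (b + c)%MM /\ mdeg b = d.
Proof.
elim: d => [|d IHd] le_da; first by exists 0%MM, a; rewrite add0m mdeg0.
have [b [c [def_a mdeg_b]]] := IHd (ltnW le_da).
have [l cl] : exists l, (0 < c l)%N.
  apply/existsP; apply: contraLR le_da => /existsPn c0.
  rewrite -leqNgt def_a mdegD mdeg_b mdegE big1 ?addn0 // => l _.
  by apply/eqP; rewrite -leqn0 leqNgt c0.
exists (b + U_(l))%MM, (c - U_(l))%MM; split; last by rewrite mdegD mdeg1 mdeg_b addn1.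
rewrite def_a -addmA; congr (_ + _)%MM; apply/mnmP => l'.
rewrite mnmDE mnmBE mnm1E; case: eqP => [<-|_]; last by rewrite subn0.
by rewrite addnC subnK.
Qed.

Section AMGMCone.
(* [C] abstracts the SOBS polynomials and [M] the monomial terms [c X^a]. *)
Variables (R : comNzRingType) (C M : R -> Prop).
Hypotheses (C0 : C 0) (CD : forall p q, C p -> C q -> C (p + q)).
Hypothesis C_divn : forall p s, (0 < s)%N -> C (p *+ s) -> C p.
Hypothesis C_sqrB : forall p q, M p -> M q -> C ((p - q) ^+ 2).
Hypotheses (M1 : M 1) (MM : forall p q, M p -> M q -> M (p * q)).
Variables (k : nat) (x : 'I_k -> R).
Hypothesis Mx : forall l, M (x l).

Let C_muln p s : C p -> C (p *+ s).
Proof. by move=> Cp; elim: s => [|s IHs]; rewrite ?mulr0n // mulrS; apply: CD. Qed.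

Let M_exp p e : M p -> M (p ^+ e).
Proof. by move=> Mp; elim: e => [|e IHe]; rewrite ?expr0 // exprS; apply: MM. Qed.

Let M_prod (P : pred 'I_k) (e : 'X_{1..k}) : M (\prod_(l | P l) x l ^+ e l).
Proof. by apply: (big_ind M) => // l _; apply: M_exp. Qed.

Lemma pair_smoothing_cone a i j : i != j ->
  C (mmap1 x (mmove a j i) ^+ 2 *+ a i + mmap1 x (mmove a i j) ^+ 2 *+ a j
     - mmap1 x a ^+ 2 *+ (a i + a j)).
Proof.
move=> neq_ij; have neq_ji : j != i by rewrite eq_sym.
rewrite (mmap1_pair x a neq_ij) (mmap1_mmove x a neq_ij) (mmap1_mmove x a neq_ji).
rewrite (addnC (a j)) (eq_bigl _ _ (fun l => andbC (l != j) (l != i))).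
set r := \prod_(l | _) _.
have Mr : M r by apply: M_prod.
have gen p q : C (r ^+ 2 * (x i ^+ 2) ^+ p * (x j ^+ 2) ^+ q * (x i ^+ 2 - x j ^+ 2) ^+ 2).
  have -> : r ^+ 2 * (x i ^+ 2) ^+ p * (x j ^+ 2) ^+ q * (x i ^+ 2 - x j ^+ 2) ^+ 2
      = (r * x i ^+ p * x j ^+ q * x i ^+ 2 - r * x i ^+ p * x j ^+ q * x j ^+ 2) ^+ 2.
    by rewrite -!exprM !(mulnC 2%N) !exprM; ring.
  by apply: C_sqrB; do !apply: MM => //; apply: M_exp.
have := amgm2_cone C0 CD gen (a i) (a j); congr C.
by rewrite -!exprM !(mulnC 2%N) !exprM; ring.
Qed.

Let agiform m (a : 'X_{1..k}) := power_sum x (2 * m) a - mmap1 x a ^+ 2 *+ m.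

Let agiform_mmove m (a : 'X_{1..k}) i j : i != j -> (0 < a i + a j)%N ->
  C (agiform m (mmove a i j)) -> C (agiform m (mmove a j i)) -> C (agiform m a).
Proof.
move=> neq_ij s_gt0 CA CB; apply: (C_divn s_gt0).
have -> : agiform m a *+ (a i + a j)
   = agiform m (mmove a i j) *+ a j + agiform m (mmove a j i) *+ a i
     + (mmap1 x (mmove a j i) ^+ 2 *+ a i + mmap1 x (mmove a i j) ^+ 2 *+ a j
        - mmap1 x a ^+ 2 *+ (a i + a j)) *+ m.
  by rewrite /agiform mulrnBl (power_sum_mmove x _ _ neq_ij); ring.
by apply: CD; first apply: CD; apply: C_muln => //; apply: pair_smoothing_cone.
Qed.

Lemma amgm_cone (a : 'X_{1..k}) : C (power_sum x (2 * mdeg a) a - mmap1 x a ^+ 2 *+ mdeg a).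
Proof.
have [N] := ubnP (nalpha a); elim: N a => // N IHN a lt_aN.
have [/existsP [i /existsP [j /and3P [neq_ij ai aj]]] | /existsPn single] :=
  boolP [exists i, exists j, [&& i != j, a i != 0%N & a j != 0%N]].
  have neq_ji : j != i by rewrite eq_sym.
  apply: (agiform_mmove neq_ij); first by rewrite addn_gt0 lt0n ai.
    rewrite -(mdeg_mmove a neq_ij); apply: IHN.
    exact: leq_trans (nalpha_mmove ai aj) _.
  rewrite -(mdeg_mmove a neq_ji); apply: IHN.
  exact: leq_trans (nalpha_mmove aj ai) _.
rewrite power_sum_single ?subrr // => i j ai aj; apply/eqP; apply: contraT => neq_ij.
by have /existsPn/(_ j) := single i; rewrite neq_ij ai aj.
Qed.

Lemma amgm_cone_even (a : 'X_{1..k}) d : mdeg a = (2 * d)%N ->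
  C (power_sum x (2 * d) a - mmap1 x a *+ (2 * d)).
Proof.
move=> mdeg_a; have [b [c [def_a mdeg_b]]] : exists b c, a = (b + c)%MM /\ mdeg b = d.
  by apply: mdeg_split; rewrite mdeg_a leq_pmull.
have mdeg_c : mdeg c = d.
  by apply/eqP; rewrite -(eqn_add2l d) -{1}mdeg_b -mdegD -def_a mdeg_a addnn mul2n.
have := amgm_cone b; have := amgm_cone c; rewrite mdeg_b mdeg_c => Cc Cb.
rewrite def_a power_sumD (commr_mmap1_M _ _ (fun _ _ => mulrC _ _)).
have -> : power_sum x (2 * d) b + power_sum x (2 * d) c - (mmap1 x b * mmap1 x c) *+ (2 * d)
   = (power_sum x (2 * d) b - mmap1 x b ^+ 2 *+ d) + (power_sum x (2 * d) c - mmap1 x c ^+ 2 *+ d)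
     + (mmap1 x b - mmap1 x c) ^+ 2 *+ d by ring.
by apply: CD; first apply: CD => //; apply: C_muln; apply: C_sqrB; apply: M_prod.
Qed.

End AMGMCone.

Lemma Rpower_natr (x y : RR) e : Rpower.Rpower x y ^+ e = Rpower.Rpower x (y * e%:R).
Proof.
rewrite -RpowE -Rpower.Rpower_pow; last exact: Exp_prop.exp_pos.
by rewrite Rpower.Rpower_mult INRE.
Qed.

Lemma prod_flip_odd (R : comNzRingType) n (t : 'I_n -> R) (a : 'X_{1..n}) j : odd (a j) ->
  \prod_(k < n) (if k == j then - t k else t k) ^+ a k = - \prod_(k < n) t k ^+ a k.
Proof.
move=> odd_aj; rewrite (bigD1 j) // [in RHS](bigD1 j) //= eqxx exprNn -signr_odd odd_aj.
rewrite expr1 mulN1r mulNr; congr (- (_ * _)).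
by apply: eq_bigr => k /negbTE ->.
Qed.

Section SOBSCone.
Variable n : nat.
Implicit Types (f g : {mpoly RR[n]}) (c : RR) (a : 'X_{1..n}).

Definition monomial_term f := exists c a, f = c *: 'X_[a].

Lemma SOBS0 : SOBS (0 : {mpoly RR[n]}).
Proof. by exists [::]; rewrite big_nil. Qed.

Lemma SOBSD f g : SOBS f -> SOBS g -> SOBS (f + g).
Proof. by move=> [s ->] [s' ->]; exists (s ++ s'); rewrite big_cat. Qed.

Lemma SOBSZ c f : 0 <= c -> SOBS f -> SOBS (c *: f).
Proof.
move=> c_ge0 [s ->].
exists [seq (Num.sqrt c * t.1.1.1, Num.sqrt c * t.1.1.2, t.1.2, t.2) | t <- s].
rewrite big_map scaler_sumr; apply: eq_bigr => t _ /=.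
by rewrite -!scalerA -scalerBr exprZn sqr_sqrtr.
Qed.

Lemma SOBS_divn f s : (0 < s)%N -> SOBS (f *+ s) -> SOBS f.
Proof.
move=> s_gt0 SOBSfs; have -> : f = (s%:R^-1 : RR) *: (f *+ s).
  by rewrite -scaler_nat scalerA mulVf ?scale1r // pnatr_eq0 -lt0n.
by apply: SOBSZ => //; rewrite invr_ge0 ler0n.
Qed.

Lemma SOBS_sum (I : eqType) (r : seq I) (P : pred I) (F : I -> {mpoly RR[n]}) :
  (forall i, i \in r -> P i -> SOBS (F i)) -> SOBS (\sum_(i <- r | P i) F i).
Proof.
move=> SOBSF; rewrite big_seq_cond; elim/big_ind: _ => //; first exact: SOBS0.
  exact: SOBSD.
by move=> i /andP [] /SOBSF.
Qed.

Lemma SOBS_sqrB_term f g : monomial_term f -> monomial_term g -> SOBS ((f - g) ^+ 2).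
Proof. by move=> [c [a ->]] [c' [a' ->]]; exists [:: (c, c', a, a')]; rewrite big_seq1. Qed.

Lemma monomial_term1 : monomial_term 1.
Proof. by exists 1, 0%MM; rewrite mpolyX0 scale1r. Qed.

Lemma monomial_termM f g : monomial_term f -> monomial_term g -> monomial_term (f * g).
Proof.
move=> [c [a ->]] [c' [a' ->]]; exists (c * c'), (a + a')%MM.
by rewrite -scalerAl -scalerAr scalerA mpolyXD.
Qed.

Lemma SOBS_even_term c a : 0 <= c -> (forall i, ~~ odd (a i)) -> SOBS (c *: 'X_[a]).
Proof.
move=> c_ge0 even_a; pose h := [multinom (a l)./2 | l < n].
have -> : a = (h + h)%MM.
  by apply/mnmP => l; rewrite mnmDE mnmE addnn halfK (negbTE (even_a l)) subn0.
exists [:: (Num.sqrt c, 0, h, h)]; rewrite big_seq1 /= scale0r subr0.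
by rewrite exprZn sqr_sqrtr // mpolyXD expr2.
Qed.

Lemma mono2dE d (i : 'I_n) : mono2d d i = (U_(i) *+ (2 * d))%MM.
Proof.
by apply/mnmP => l; rewrite mnmE mulmnE mnm1E eq_sym; case: (i == l); rewrite ?mul1n ?mul0n.
Qed.

Lemma SOBS_amgm d (t : 'I_n -> RR) a : mdeg a = (2 * d)%N ->
  SOBS (\sum_(k < n) (t k ^+ (2 * d) *+ a k) *: 'X_[mono2d d k]
        - ((\prod_(k < n) t k ^+ a k) *+ (2 * d)) *: 'X_[a]).
Proof.
move=> mdeg_a; pose x k := t k *: 'X_k : {mpoly RR[n]}.
have -> : \sum_(k < n) (t k ^+ (2 * d) *+ a k) *: 'X_[mono2d d k] = power_sum x (2 * d) a.
  by apply: eq_bigr => k _; rewrite exprZn mpolyXn mono2dE scalerMnl.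
have -> : ((\prod_(k < n) t k ^+ a k) *+ (2 * d)) *: 'X_[a] = mmap1 x a *+ (2 * d).
  rewrite -scalerMnl /mmap1 (eq_bigr _ (fun k _ => exprZn _ _ _)) scaler_prod.
  by rewrite -(mmap1_id _ a).
apply: (amgm_cone_even SOBS0 SOBSD SOBS_divn SOBS_sqrB_term monomial_term1 monomial_termM) => //.
by move=> k; exists (t k), U_(k)%MM.
Qed.

Lemma prod_Rpower_roots (F : RR) a : 0 < F -> a != 0%MM ->
  \prod_(k < n) (if a k == 0%N then 1 else Rpower.Rpower F (1 / (a k * nalpha a)%:R)) ^+ a k
  = F.
Proof.
move=> F_gt0 a_neq0; have N_gt0 : (0 < nalpha a)%N.
  apply/card_gt0P; apply/existsP; apply: contraT => /existsPn a0.
  by case/negP: a_neq0; apply/eqP/mnmP => l; have := a0 l; rewrite inE negbK mnm0E => /eqP.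
rewrite (bigID (fun k => a k != 0%N)) /= [X in _ * X]big1 ?mulr1; last first.
  by move=> k; rewrite negbK => /eqP ->; rewrite expr0.
rewrite (eq_bigr (fun _ => Rpower.Rpower F (1 / (nalpha a)%:R))); last first.
  move=> k ak; rewrite (negbTE ak) Rpower_natr natrM; congr Rpower.Rpower.
  by field; rewrite !pnatr_eq0 -lt0n N_gt0 ak.
rewrite prodr_const Rpower_natr mul1r mulVf ?pnatr_eq0 -?lt0n //.
by apply: Rpower.Rpower_1; apply/RltP.
Qed.

Lemma Delta_witness d a c : (0 < d)%N -> a != 0%MM -> c != 0 ->
  (c < 0) || [exists i, odd (a i)] ->
  exists t : 'I_n -> RR,
    (forall k, a k != 0%N -> t k ^+ (2 * d)
       = Rpower.Rpower (`|c| / (2 * d)%:R) ((2 * d)%:R / (a k * nalpha a)%:R))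
    /\ (\prod_(k < n) t k ^+ a k) *+ (2 * d) = - c.
Proof.
move=> d_gt0 a_neq0 c_neq0 sign_a; set F := `|c| / (2 * d)%:R.
have d2_neq0 : (2 * d)%:R != 0 :> RR by rewrite pnatr_eq0 muln_eq0 -lt0n d_gt0.
have F_gt0 : 0 < F by rewrite divr_gt0 ?normr_gt0 // ltr0n muln_gt0 d_gt0.
have F2d : F *+ (2 * d) = `|c| by rewrite -mulr_natr divfK.
pose t0 k := if a k == 0%N then 1 else Rpower.Rpower F (1 / (a k * nalpha a)%:R).
have t0_2d k : a k != 0%N ->
    t0 k ^+ (2 * d) = Rpower.Rpower F ((2 * d)%:R / (a k * nalpha a)%:R).
  by move=> ak; rewrite /t0 (negbTE ak) Rpower_natr mul1r mulrC.
have prod_t0 := prod_Rpower_roots F_gt0 a_neq0.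
have [c_lt0 | c_ge0] := ltP c 0.
  by exists t0; rewrite prod_t0 F2d ltr0_norm.
have [j odd_aj] : exists j, odd (a j).
  by apply/existsP; move: sign_a; rewrite ltNge c_ge0.
exists (fun k => if k == j then - t0 k else t0 k); split.
  by move=> k ak; case: (k == j); rewrite -?t0_2d // !exprM sqrrN.
rewrite prod_flip_odd // prod_t0 mulNrn F2d gtr0_norm //.
by rewrite lt_def c_neq0 c_ge0.
Qed.

Definition amgm_weight d c a (k : 'I_n) : RR :=
  (a k)%:R * Rpower.Rpower (`|c| / (2 * d)%:R) ((2 * d)%:R / (a k * nalpha a)%:R).

Lemma SOBS_Delta_term d a c : (0 < d)%N -> mdeg a = (2 * d)%N -> c != 0 ->
  (c < 0) || [exists i, odd (a i)] ->
  SOBS (\sum_(k < n) amgm_weight d c a k *: 'X_[mono2d d k] + c *: 'X_[a]).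
Proof.
move=> d_gt0 mdeg_a c_neq0 sign_a.
have a_neq0 : a != 0%MM by rewrite -mdeg_eq0 mdeg_a muln_eq0 -lt0n d_gt0.
have [t [t_2d prod_t]] := Delta_witness d_gt0 a_neq0 c_neq0 sign_a.
have := SOBS_amgm t mdeg_a; rewrite prod_t scaleNr opprK; congr (SOBS (_ + _)).
apply: eq_bigr => k _; rewrite /amgm_weight -mulr_natl.
by have [->|ak] := eqVneq (a k) 0%N; rewrite ?mul0r ?t_2d.
Qed.

End SOBSCone.

Lemma big_mem_uniq (V : nmodType) (T : eqType) (r s : seq T) (F : T -> V) :
  uniq r -> uniq s -> (forall a, a \in s -> a \notin r -> F a = 0) ->
  \sum_(a <- r | a \in s) F a = \sum_(a <- s) F a.
Proof.
move=> uniq_r uniq_s F0; rewrite [RHS](bigID (mem r)) /=.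
rewrite [X in _ + X]big1_seq ?addr0 => [|a /andP [notin_r /F0]]; last exact.
rewrite -[LHS]big_filter -[RHS]big_filter; apply: perm_big.
by apply: uniq_perm; rewrite ?filter_uniq // => a; rewrite !mem_filter andbC.
Qed.

Section Decomposition.
Variables (n d : nat) (f : {mpoly RR[n]}).
Hypothesis d_gt0 : (0 < d)%N.

Lemma mono2d_inj : injective (mono2d d : 'I_n -> 'X_{1..n}).
Proof.
move=> i j /mnmP /(_ i); rewrite !mnmE eqxx; case: (i =P j) => // _ /eqP.
by rewrite muln_eq0 (gtn_eqF d_gt0).
Qed.

Lemma sum_vertices :
  \sum_(a <- msupp f | [exists i, a == mono2d d i]) f@_a *: 'X_[a]
  = \sum_(i < n) f@_(mono2d d i) *: 'X_[mono2d d i].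
Proof.
have -> : \sum_(i < n) f@_(mono2d d i) *: 'X_[mono2d d i]
        = \sum_(a <- codom (mono2d d)) f@_a *: 'X_[a] by rewrite codomE big_map big_enum.
have uniq_vertices : uniq (codom (@mono2d n d)).
  by rewrite codomE map_inj_uniq ?enum_uniq //; apply: mono2d_inj.
rewrite -(big_mem_uniq (r := msupp f)) ?msupp_uniq // => [|a _]; last first.
  by rewrite mcoeff_msupp negbK => /eqP ->; rewrite scale0r.
apply: eq_bigl => a; apply/existsP/codomP => [[i /eqP ->]|[i ->]]; exists i => //.
Qed.

Lemma rhs_boundE i :
  rhs_bound d f i = \sum_(a <- msupp f | inDelta d f a) amgm_weight d f@_a a i.
Proof.
rewrite /rhs_bound big_mkcondr; apply: eq_bigr => a _.
by case: eqVneq => //= ai0; rewrite /amgm_weight ai0 mul0r.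
Qed.

Lemma inDelta_nonvertex a : inDelta d f a -> ~~ [exists i, a == mono2d d i].
Proof. by case/andP => /and3P [_ _ /forallP nvert] _; apply/existsPn. Qed.

Lemma mpoly_decomposition : f =
    \sum_(i < n) (f@_(mono2d d i) - rhs_bound d f i) *: 'X_[mono2d d i]
  + \sum_(a <- msupp f | inDelta d f a)
      (\sum_(i < n) amgm_weight d f@_a a i *: 'X_[mono2d d i] + f@_a *: 'X_[a])
  + \sum_(a <- msupp f | ~~ [exists i, a == mono2d d i] && ~~ inDelta d f a)
      f@_a *: 'X_[a].
Proof.
have rhs_exchange : \sum_(i < n) rhs_bound d f i *: 'X_[mono2d d i] =
    \sum_(a <- msupp f | inDelta d f a) \sum_(i < n) amgm_weight d f@_a a i *: 'X_[mono2d d i].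
  rewrite -exchange_big; apply: eq_bigr => i _.
  by rewrite rhs_boundE scaler_suml.
rewrite {1}(mpolyE f) (bigID (fun a => [exists i, a == mono2d d i])) /= sum_vertices.
rewrite [X in _ + X](bigID (inDelta d f)) /= big_split /=.
rewrite (eq_bigl (inDelta d f)) => [|a]; last first.
  by apply/andP/idP => [[]//|Delta_a]; split => //; exact: inDelta_nonvertex.
have split_vertex : \sum_(i < n) (f@_(mono2d d i) - rhs_bound d f i) *: 'X_[mono2d d i]
    = \sum_(i < n) f@_(mono2d d i) *: 'X_[mono2d d i]
      - \sum_(i < n) rhs_bound d f i *: 'X_[mono2d d i].
  by rewrite -sumrB; apply: eq_bigr => i _; rewrite scalerBl.
by rewrite split_vertex rhs_exchange; ring.
Qed.

Lemma nonDelta_coef a : a \in msupp f -> mdeg a = (2 * d)%N ->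
  ~~ [exists i, a == mono2d d i] -> ~~ inDelta d f a ->
  0 <= f@_a /\ forall i, ~~ odd (a i).
Proof.
move=> supp_a mdeg_a nvert nDelta.
have Omega_a : inOmega d f a.
  apply/and3P; split; first by rewrite -mcoeff_msupp.
    by rewrite -mdeg_eq0 mdeg_a muln_eq0 (gtn_eqF d_gt0).
  by rewrite -negb_exists.
move: nDelta; rewrite /inDelta Omega_a negb_or -leNgt => /andP [fa_ge0 /existsPn].
by split.
Qed.

End Decomposition.

Theorem corollary2p9 (n d : nat) (f : {mpoly RR[n]}) :
  (0 < d)%N ->
  f \is (2 * d)%N.-homog ->
  (forall i : 'I_n, rhs_bound d f i <= f@_(mono2d d i)) ->
  SOBS f.
Proof.
move=> d_gt0 homog_f bound; rewrite (mpoly_decomposition f d_gt0).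
have mdeg_supp := dhomog_mf homog_f.
apply: SOBSD; first apply: SOBSD.
- apply: SOBS_sum => i _ _; apply: SOBS_even_term; first by rewrite subr_ge0.
  by move=> l; rewrite mono2dE mulmnE mulnCA oddM.
- apply: SOBS_sum => a supp_a /andP [/and3P [fa_neq0 _ _] sign_a].
  exact: SOBS_Delta_term d_gt0 (mdeg_supp a supp_a) fa_neq0 sign_a.
- apply: SOBS_sum => a supp_a /andP [nvert nDelta].
  have [fa_ge0 even_a] := nonDelta_coef d_gt0 supp_a (mdeg_supp a supp_a) nvert nDelta.
  exact: SOBS_even_term.
Qed.
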